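(* Let $!\Gamma$ be a nonempty finite multiset of ILL formulae each of the form $!\gamma$, $\psi$ an ILL formula, $\mathcal{B}$ a base and $L,K$ atomic multisets. If $\Vdash^L_{\mathcal{B}}!\Gamma$ and $!\Gamma\Vdash^K_{\mathcal{B}}\psi$, then $\Vdash^{L,K}_{\mathcal{B}}\psi$.
   Context: Fix a set $\mathbb{A}$ of propositional atoms. ILL formulae: $\phi ::= p\in\mathbb{A} \mid \top \mid 0 \mid 1 \mid \phi\multimap\phi \mid \phi\otimes\phi \mid \phi\,\&\,\phi \mid \phi\oplus\phi \mid\ !\phi$. All multisets are finite; ''$\Gamma,\Delta$'' denotes multiset union. Atomic rules and bases: an atomic sequent is $P\Rightarrow p$ with $P$ a multiset of atoms, $p$ an atom. An atomic box is a multiset of atomic sequents. An atomic rule is a triple $\langle\mathbf{A},\mathbf{S},p\rangle$ with $\mathbf{A}$ a multiset of atomic boxes, $\mathbf{S}$ an atomic box, $p$ an atom. A base is a set of atomic rules. An atom $p$ is persistent in $\mathcal{B}$ if some $\langle\varnothing,\mathbf{S},p\rangle\in\mathcal{B}$ has $\mathbf{S}\neq\varnothing$. Derivability $\vdash_{\mathcal{B}}$: (Ref) $p\vdash_{\mathcal{B}}p$; (App) if $\langle\mathbf{A},\mathbf{S},p\rangle\in\mathcal{B}$ with $\mathbf{A}=\{\mathbf{T}_1,\dots,\mathbf{T}_m\}$, and there are atomic multisets $C_1,\dots,C_n$ ($n\ge m$) and a multiset $D=\{d_{m+1},\dots,d_n\}$ of atoms persistent in $\mathcal{B}$ such that $C_i,Q\vdash_{\mathcal{B}}q$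 for every $i\le m$ and every $Q\Rightarrow q\in\mathbf{T}_i$, $C_j\vdash_{\mathcal{B}}d_j$ for every $m<j\le n$, and $D,U\vdash_{\mathcal{B}}v$ for every $U\Rightarrow v\in\mathbf{S}$, then $C_1,\dots,C_n\vdash_{\mathcal{B}}p$. Support $\Vdash^L_{\mathcal{B}}$ (base $\mathcal{B}$, atomic multiset $L$), by induction on formulae: $\Vdash^L_{\mathcal{B}}p$ iff $L\vdash_{\mathcal{B}}p$; $\Vdash^L_{\mathcal{B}}\varphi\multimap\psi$ iff $\varphi\Vdash^L_{\mathcal{B}}\psi$; $\Vdash^L_{\mathcal{B}}\varphi\otimes\psi$ iff for all $\mathcal{C}\supseteq\mathcal{B}$, atomic $K$, atoms $p$: if $\varphi,\psi\Vdash^K_{\mathcal{C}}p$ then $\Vdash^{L,K}_{\mathcal{C}}p$; $\Vdash^L_{\mathcal{B}}1$ iff for all $\mathcal{C}\supseteq\mathcal{B}$, $K$, $p$: if $\Vdash^K_{\mathcal{C}}p$ then $\Vdash^{L,K}_{\mathcal{C}}p$; $\Vdash^L_{\mathcal{B}}\varphi\&\psi$ iff $\Vdash^L_{\mathcal{B}}\varphi$ and $\Vdash^L_{\mathcal{B}}\psi$; $\Vdash^L_{\mathcal{B}}\varphi\oplus\psi$ iff for all $\mathcal{C}\supseteq\mathcal{B}$, $K$, $p$: if $\varphi\Vdash^K_{\mathcal{C}}p$ and $\psi\Vdash^K_{\mathcal{C}}p$ then $\Vdash^{L,K}_{\mathcal{C}}p$; $\Vdash^L_{\mathcal{B}}0$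 iff $\Vdash^{L,K}_{\mathcal{B}}p$ for all atoms $p$ and atomic $K$; $\Vdash^L_{\mathcal{B}}\top$ always; $\Vdash^L_{\mathcal{B}}!\varphi$ iff for all $\mathcal{C}\supseteq\mathcal{B}$, $K$, $p$: if (for all $\mathcal{D}\supseteq\mathcal{C}$, $\Vdash^{\varnothing}_{\mathcal{D}}\varphi$ implies $\Vdash^K_{\mathcal{D}}p$) then $\Vdash^{L,K}_{\mathcal{C}}p$. For nonempty multisets: $\Vdash^L_{\mathcal{B}}\Gamma,\Delta$ iff $L=K,M$ with $\Vdash^K_{\mathcal{B}}\Gamma$ and $\Vdash^M_{\mathcal{B}}\Delta$. For a nonempty antecedent written $!\Delta,\Theta$, where $!\Delta$ collects the formulae with top-level connective $!$ (with $\Delta$ the formulae under those $!$) and $\Theta$ contains none: $!\Delta,\Theta\Vdash^L_{\mathcal{B}}\varphi$ iff for all $\mathcal{C}\supseteq\mathcal{B}$ and atomic $K$, if $\Vdash^{\varnothing}_{\mathcal{C}}\delta$ for every $\delta\in\Delta$ and $\Vdash^K_{\mathcal{C}}\Theta$ then $\Vdash^{L,K}_{\mathcal{C}}\varphi$ (when $\Theta$ is empty, $K$ is empty). An empty antecedent: $\varnothing\Vdash^L_{\mathcal{B}}\varphi$ means $\Vdash^L_{\mathcal{B}}\varphi$. *)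

(* base-extension semantics for ILL (atoms of an arbitrary type A;
   finite multisets represented by lists, multiset equality = Permutation). *)
From Stdlib Require Import List Permutation.
Import ListNotations.
Set Implicit Arguments.

Section ILL.
Variable A : Type.

Definition sequent : Type := (list A * A)%type.
Definition box : Type := list sequent.
Definition rule : Type := (list box * box * A)%type.
Definition base : Type := rule -> Prop.

Definition subbase (B C : base) : Prop := forall r, B r -> C r.

Definition persistent (B : base) (p : A) : Prop :=
  exists S : box, B ([], S, p) /\ S <> [].

(* derivability  L |-_B p.  In (App): Cs = [C_1;..;C_m] are paired with the
   boxes As = [T_1;..;T_m]; CD = [(C_{m+1},d_{m+1});..;(C_n,d_n)]. *)
Inductive deriv (B : base) : list A -> A -> Prop :=
| d_ref (p : A) : deriv B [p] p
| d_app (As : list box) (S : box) (p : A) (Cs : list (list A))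
        (CD : list (list A * A)) (L : list A) :
    B (As, S, p) ->
    length Cs = length As ->
    (forall i, i < length As -> forall Q q, In (Q, q) (nth i As []) ->
        deriv B (nth i Cs [] ++ Q) q) ->
    (forall c d, In (c, d) CD -> persistent B d /\ deriv B c d) ->
    (forall U v, In (U, v) S -> deriv B (map snd CD ++ U) v) ->
    Permutation L (concat Cs ++ concat (map fst CD)) ->
    deriv B L p.

Inductive formula : Type :=
| FAtom (p : A)
| FTop
| FZero
| FOne
| FLolli (f g : formula)
| FTensor (f g : formula)
| FWith (f g : formula)
| FPlus (f g : formula)
| FBang (f : formula).

(* support  ||-^L_B phi.  For an antecedent formula chi, its contribution with
   resource M in base D is: if chi = !delta then M = [] and ||-^[]_D delta,
   otherwise ||-^M_D chi. *)
Fixpoint supp (B : base) (L : list A) (phi : formula) {struct phi} : Prop :=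
  match phi with
  | FAtom p => deriv B L p
  | FTop => True
  | FZero => forall (p : A) (K : list A), deriv B (L ++ K) p
  | FOne => forall C, subbase B C -> forall (K : list A) (p : A),
      deriv C K p -> deriv C (L ++ K) p
  | FLolli f g => forall C, subbase B C -> forall K : list A,
      (match f with
       | FBang d => K = [] /\ supp C [] d
       | _ => supp C K f end) ->
      supp C (L ++ K) g
  | FTensor f g => forall C, subbase B C -> forall (K : list A) (p : A),
      (forall D, subbase C D -> forall M1 M2 : list A,
         (match f with
          | FBang d => M1 = [] /\ supp D [] d
          | _ => supp D M1 f end) ->
         (match g with
          | FBang d => M2 = [] /\ supp D [] d
          | _ => supp D M2 g end) ->
         deriv D (K ++ (M1 ++ M2)) p) ->
      deriv C (L ++ K) p
  | FWith f g => supp B L f /\ supp B L g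
  | FPlus f g => forall C, subbase B C -> forall (K : list A) (p : A),
      (forall D, subbase C D -> forall M : list A,
         (match f with
          | FBang d => M = [] /\ supp D [] d
          | _ => supp D M f end) ->
         deriv D (K ++ M) p) ->
      (forall D, subbase C D -> forall M : list A,
         (match g with
          | FBang d => M = [] /\ supp D [] d
          | _ => supp D M g end) ->
         deriv D (K ++ M) p) ->
      deriv C (L ++ K) p
  | FBang f => forall C, subbase B C -> forall (K : list A) (p : A),
      (forall D, subbase C D -> supp D [] f -> deriv D K p) ->
      deriv C (L ++ K) p
  end.

Fixpoint supp_multi (B : base) (L : list A) (G : list formula) : Prop :=
  match G with
  | [] => L = []
  | [f] => supp B L f
  | f :: G' => exists K M : list A,
      Permutation L (K ++ M) /\ supp B K f /\ supp_multi B M G'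
  end.

Definition ante_hyp (C : base) (M : list A) (chi : formula) : Prop :=
  match chi with
  | FBang d => M = [] /\ supp C [] d
  | _ => supp C M chi
  end.

Definition supp_ante (B : base) (L : list A) (G : list formula) (phi : formula)
  : Prop :=
  match G with
  | [] => supp B L phi
  | _ => forall C, subbase B C -> forall Ms : list (list A),
      Forall2 (ante_hyp C) Ms G -> supp C (L ++ concat Ms) phi
  end.

End ILL.

(* The support clause of [!g] is an elimination rule into atoms: if
   [||-^L_B !g], an atom derivable from [K] in every extension supporting [g]
   with no resources is derivable from [L, K].  Induction on [psi] extends this
   to arbitrary conclusions: the clauses for [0], [1], [*], [+] and [!] again
   end in an atom, while those for [&] and [-o] reduce to the components.
   Eliminating the formulae of [!Gamma] one at a time then discharges the
   antecedent, in which each [!gamma] contributes no resources. *)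

From Stdlib Require Import List Permutation.
Import ListNotations.

Section Support.
Context {A : Type}.
Implicit Types (B C D : base A) (L K M : list A) (p : A).

Lemma subbase_refl B : subbase B B.
Proof. intros r Hr; exact Hr. Qed.

Lemma subbase_trans {B C D} : subbase B C -> subbase C D -> subbase B D.
Proof. intros HBC HCD r Hr; apply HCD, HBC, Hr. Qed.

Lemma deriv_subbase {B C} : subbase B C -> forall {L p}, deriv B L p -> deriv C L p.
Proof.
  intros HBC; fix IH 3; intros L p Hd.
  destruct Hd as [p|As S p Cs CD L Hr Hlen HAs HCD HS HL].
  - apply d_ref.
  - apply (d_app (B := C) As S p Cs CD (HBC _ Hr)); auto.
    intros c d Hin; destruct (HCD c d Hin) as [[S0 [HS0 Hne]] Hcd].
    split; [exists S0; auto | exact (IH _ _ Hcd)].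
Qed.

Lemma deriv_perm {B L L' p} : Permutation L L' -> deriv B L p -> deriv B L' p.
Proof.
  intros HP Hd; destruct Hd as [p|As S p Cs CD L Hr Hlen HAs HCD HS HL].
  - apply Permutation_length_1_inv in HP; subst; apply d_ref.
  - apply (d_app As S p Cs CD Hr); auto.
    exact (Permutation_trans (Permutation_sym HP) HL).
Qed.

Lemma supp_subbase {f : formula A} : forall {B C L},
  subbase B C -> supp B L f -> supp C L f.
Proof.
  induction f; simpl; intros B C L HBC Hf; auto;
    try (intros; apply Hf; eauto using subbase_trans).
  - exact (deriv_subbase HBC Hf).
  - intros p K; exact (deriv_subbase HBC (Hf p K)).
  - destruct Hf; eauto.
Qed.

Lemma ante_hyp_subbase {f : formula A} {B C M} :
  subbase B C -> ante_hyp B M f -> ante_hyp C M f.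
Proof.
  intros HBC Hf; destruct f; try exact (supp_subbase HBC Hf).
  destruct Hf as [HM Hg]; split; [exact HM | exact (supp_subbase HBC Hg)].
Qed.

Lemma supp_multi_subbase {G : list (formula A)} : forall {B C L},
  subbase B C -> supp_multi B L G -> supp_multi C L G.
Proof.
  induction G as [|f [|f' G] IH]; simpl; intros B C L HBC HG; auto.
  - exact (supp_subbase HBC HG).
  - destruct HG as [K [M [HP [Hf HG]]]].
    exists K, M; split; [exact HP | split].
    + exact (supp_subbase HBC Hf).
    + exact (IH _ _ _ HBC HG).
Qed.

Lemma supp_perm {f : formula A} : forall {B L L'},
  Permutation L L' -> supp B L f -> supp B L' f.
Proof.
  induction f; simpl; intros B L L' HP Hf; auto;
    try (intros; eapply deriv_perm; [apply Permutation_app_tail, HP | eauto]).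
  - exact (deriv_perm HP Hf).
  - intros C HC K HK; apply (IHf2 _ (L ++ K)); [apply Permutation_app_tail, HP | auto].
  - destruct Hf; eauto.
Qed.

Lemma supp_bang_elim (psi g : formula A) : forall B L K,
  supp B L (FBang g) ->
  (forall C, subbase B C -> supp C [] g -> supp C K psi) ->
  supp B (L ++ K) psi.
Proof.
  induction psi as [q| | | |psi1 _ psi2 IH2|psi1 _ psi2 _|psi1 IH1 psi2 IH2|psi1 _ psi2 _|psi1 _];
    simpl; intros B L K Hg HK.
  - exact (Hg B (subbase_refl _) K q HK).
  - exact I.
  - intros p K'; rewrite <- app_assoc.
    apply (Hg B (subbase_refl _)); intros D HD HgD; exact (HK D HD HgD p K').
  - intros C HC K' p Hp; rewrite <- app_assoc; apply Hg; [exact HC |].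
    intros D HD HgD.
    apply (HK D (subbase_trans HC HD) HgD D (subbase_refl _)).
    exact (deriv_subbase HD Hp).
  - intros C HC K' Hpsi1; rewrite <- app_assoc.
    apply IH2; [exact (supp_subbase (f := FBang g) HC Hg) |].
    intros D HD HgD.
    exact (HK D (subbase_trans HC HD) HgD D (subbase_refl _) K'
              (ante_hyp_subbase (f := psi1) HD Hpsi1)).
  - intros C HC K' p Hp; rewrite <- app_assoc; apply Hg; [exact HC |].
    intros D HD HgD.
    apply (HK D (subbase_trans HC HD) HgD D (subbase_refl _)).
    intros E HE; apply Hp, (subbase_trans HD HE).
  - split; [apply IH1 | apply IH2]; auto; intros C HC HgC; apply (HK C HC HgC).
  - intros C HC K' p Hp1 Hp2; rewrite <- app_assoc; apply Hg; [exact HC |].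
    intros D HD HgD.
    apply (HK D (subbase_trans HC HD) HgD D (subbase_refl _));
      intros E HE; [apply Hp1 | apply Hp2]; exact (subbase_trans HD HE).
  - intros C HC K' p Hp; rewrite <- app_assoc; apply Hg; [exact HC |].
    intros D HD HgD.
    apply (HK D (subbase_trans HC HD) HgD D (subbase_refl _)).
    intros E HE; apply Hp, (subbase_trans HD HE).
Qed.

Lemma supp_bangs_elim {psi : formula A} {G : list (formula A)} :
  G <> [] -> forall {B L K},
  supp_multi B L (map (@FBang A) G) ->
  (forall C, subbase B C -> Forall (fun g => supp C [] g) G -> supp C K psi) ->
  supp B (L ++ K) psi.
Proof.
  induction G as [|g [|g' G] IH]; intros Hne B L K HG HK; [congruence | |].
  - apply (supp_bang_elim psi g B L K HG).
    intros C HC Hg; apply HK; auto.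
  - destruct HG as [L1 [L2 [HP [Hg HG]]]].
    apply (supp_perm (L := L1 ++ L2 ++ K)).
    { rewrite app_assoc; apply Permutation_app_tail, Permutation_sym, HP. }
    apply (supp_bang_elim psi g B L1 (L2 ++ K) Hg).
    intros C HC HgC; apply IH; [congruence | exact (supp_multi_subbase HC HG) |].
    intros D HD HGD; apply (HK D (subbase_trans HC HD)).
    constructor; [exact (supp_subbase HD HgC) | exact HGD].
Qed.

Lemma ante_hyp_bangs {C} {G : list (formula A)} :
  Forall (fun g => supp C [] g) G ->
  Forall2 (ante_hyp C) (map (fun _ => []) G) (map (@FBang A) G).
Proof. induction 1; simpl; constructor; simpl; auto. Qed.

Lemma supp_ante_bangs {psi : formula A} {G : list (formula A)} {B K} :
  G <> [] -> supp_ante B K (map (@FBang A) G) psi ->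
  forall C, subbase B C -> Forall (fun g => supp C [] g) G -> supp C K psi.
Proof.
  intros Hne Hante C HC HG.
  destruct G as [|g G]; [congruence |].
  rewrite <- (app_nil_r K).
  replace [] with (concat (map (fun _ : formula A => [] : list A) (g :: G))).
  - exact (Hante C HC _ (ante_hyp_bangs HG)).
  - clear; induction (g :: G); simpl; auto.
Qed.

End Support.

Theorem corollary3 (A : Type) (Gamma : list (formula A)) (psi : formula A)
  (B : base A) (L K : list A) :
  Gamma <> [] ->
  supp_multi B L (map (@FBang A) Gamma) ->
  supp_ante B K (map (@FBang A) Gamma) psi ->
  supp B (L ++ K) psi.
Proof.
  intros Hne HGamma Hante.
  exact (supp_bangs_elim Hne HGamma (supp_ante_bangs Hne Hante)).
Qed.
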